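(* Let $G$ be a $2$-connected graph and $K$ a connected subgraph of $G$ with at least three vertices. Then $G_K$ is $2$-connected.
   Context: Graphs are simple. For a connected graph $G$ and a subgraph $K$, $G_K$ denotes the minor of $G$ obtained by contracting, for each component of $G-K$ (the graph obtained by deleting the vertices of $K$), all edges of that component to a single vertex, and then deleting all multiple edges. *)

From mathcomp Require Import all_boot.
Set Implicit Arguments. Unset Strict Implicit. Unset Printing Implicit Defensive.

(* A (simple) graph is given by a vertex set V : {set U} inside a finType U
   together with an adjacency relation E : rel U (only its restriction to V
   matters). *)

Definition restr (U : finType) (V : {set U}) (E : rel U) : rel U :=
  fun x y => [&& x \in V, y \in V & E x y].

(* the graph (V, E) is connected (nonempty not required; every two vertices
   are joined by a path inside V) *)
Definition gconnected (U : finType) (V : {set U}) (E : rel U) : Prop :=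
  forall x y, x \in V -> y \in V -> connect (restr V E) x y.

(* 2-connected (Diestel): more than 2 vertices, and G - X connected for
   every set X of fewer than 2 vertices *)
Definition two_connected (U : finType) (V : {set U}) (E : rel U) : Prop :=
  2 < #|V| /\ gconnected V E /\ (forall v, v \in V -> gconnected (V :\ v) E).

(* components of G - S, for G = (setT, e), as vertex sets *)
Definition compsDel (T : finType) (e : rel T) (S : {set T}) : {set {set T}} :=
  [set [set y | connect (restr (~: S) e) x y] | x in ~: S].

(* G_K with V(K) = S: vertices are the singletons {x}, x in S, and the
   (contracted) components of G - S; two such vertex-blobs are adjacent iff
   they are distinct and some edge of G joins them (multiple edges deleted). *)
Definition GK_vertices (T : finType) (e : rel T) (S : {set T}) : {set {set T}} :=
  [set [set x] | x in S] :|: compsDel e S.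

Definition GK_edges (T : finType) (e : rel T) : rel {set T} :=
  fun A B => (A != B) && [exists x in A, exists y in B, e x y].

From mathcomp Require Import all_boot.
Set Implicit Arguments. Unset Strict Implicit. Unset Printing Implicit Defensive.

(* Send every vertex x of G to its branch set in G_K: {x} if x is in K, its
   component in G - K otherwise.  This map is onto the vertices of G_K and
   maps each edge of G to an edge or a single vertex of G_K, so the image of
   a connected vertex set of G is connected in G_K.  In particular G_K is
   connected, and G_K minus a vertex is the image of G minus the
   corresponding branch set.  For x in K this is G - x, which is connected
   because G is 2-connected.  For a component C of G - K it is G - C, which
   is connected because every other component sends an edge to K (G is
   connected) and K is a connected subgraph disjoint from C.  Finally, G_K
   keeps the at least three vertices of K. *)

Lemma connect_homo_in (T T' : finType) (r : rel T) (r' : rel T') (f : T -> T')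
    (A : {pred T}) :
  {in A, forall x y, r x y -> (y \in A) && connect r' (f x) (f y)} ->
  {in A, forall x y, connect r x y -> connect r' (f x) (f y)}.
Proof.
move=> homo x xA _ /connectP[p r_p ->].
elim: p x xA r_p => //= y p IHp x xA /andP[/(homo x xA)/andP[yA r'_xy] r_p].
exact: connect_trans r'_xy (IHp y yA r_p).
Qed.

Lemma connect_exit (T : finType) (r : rel T) (P : pred T) x y :
  connect r x y -> P x -> ~~ P y -> exists a b, [/\ P a, ~~ P b & r a b].
Proof.
move=> /connectP[p r_p ->]; elim: p x r_p => [|z p IHp] x /=; first by move=> _ ->.
case/andP=> r_xz r_p Px; case Pz: (P z); first exact: IHp.
by exists x, z; rewrite Pz.
Qed.

Section RestrictedGraphs.

Variables (T : finType) (e : rel T).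

Lemma restr_sym (V : {set T}) : symmetric e -> symmetric (restr V e).
Proof. by move=> e_sym x y; rewrite /restr e_sym andbCA. Qed.

Lemma connect_restr_mem (V : {set T}) x y :
  x \in V -> connect (restr V e) x y -> y \in V.
Proof.
move=> xV /connectP[p r_p ->]; elim: p x xV r_p => //= z p IHp x _.
by case/andP=> /and3P[_ zV _]; apply: IHp.
Qed.

Lemma connect_restr_sub (V W : {set T}) (e' : rel T) :
  V \subset W -> subrel e' e -> subrel (connect (restr V e')) (connect (restr W e)).
Proof.
move=> /subsetP sVW se'e; apply: connect_sub => x y /and3P[xV yV e'xy].
by apply: connect1; rewrite /restr !sVW // se'e.
Qed.

Lemma gconnected_imset (T' : finType) (e' : rel T') (f : T -> T') (V : {set T}) :
  {in V &, forall x y, e x y -> f x = f y \/ e' (f x) (f y)} ->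
  gconnected V e -> gconnected (f @: V) e'.
Proof.
move=> homo V_conn _ _ /imsetP[x xV ->] /imsetP[y yV ->].
apply: connect_homo_in xV _ (V_conn x y xV yV) => a aV b /and3P[_ bV eab].
rewrite bV /=; case: (homo a b aV bV eab) => [-> // | e'ab].
by apply: connect1; rewrite /restr !imset_f.
Qed.

End RestrictedGraphs.

Section BranchSets.

Variables (T : finType) (e : rel T) (S : {set T}).
Hypothesis e_sym : symmetric e.

Definition branch_set (x : T) : {set T} :=
  if x \in S then [set x] else [set y | connect (restr (~: S) e) x y].

Lemma mem_branch_set x : x \in branch_set x.
Proof. by rewrite /branch_set; case: ifP; rewrite inE ?eqxx ?connect0. Qed.

Lemma branch_set_subC x : x \notin S -> branch_set x \subset ~: S.
Proof.
move=> xS; rewrite /branch_set (negbTE xS); apply/subsetP => y.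
by rewrite inE; apply: connect_restr_mem; rewrite inE.
Qed.

Lemma branch_set_eq x y : y \in branch_set x -> branch_set y = branch_set x.
Proof.
rewrite /branch_set; case: ifP => xS; first by rewrite inE => /eqP->; rewrite xS.
rewrite inE => xy; have : y \in ~: S by apply: connect_restr_mem xy; rewrite inE xS.
rewrite inE => /negbTE->; apply/setP => z; rewrite !inE.
by rewrite (same_connect (sym_connect_sym (restr_sym _ e_sym)) xy).
Qed.

Lemma GK_verticesE : GK_vertices e S = branch_set @: [set: T].
Proof.
apply/setP => X; apply/idP/imsetP => [|[x _ ->]].
  rewrite !inE => /orP[] /imsetP[x xS ->]; exists x; rewrite // /branch_set.
    by rewrite xS.
  by rewrite inE in xS; rewrite (negbTE xS).
rewrite !inE /branch_set; case: ifP => xS; first by rewrite imset_f.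
by rewrite orbC imset_f // inE xS.
Qed.

Lemma GK_vertices_setD1 x :
  GK_vertices e S :\ branch_set x = branch_set @: ~: branch_set x.
Proof.
rewrite GK_verticesE; apply/setP => X; rewrite !inE.
apply/andP/imsetP => [[Xx /imsetP[y _ Xy]] | [y yx ->]].
  exists y; rewrite // inE; move: Xx; apply: contraNN.
  by rewrite Xy => /branch_set_eq ->.
split; last exact: imset_f.
by move: yx; rewrite inE; apply: contraNneq => <-; apply: mem_branch_set.
Qed.

Lemma GK_edges_branch_set x y :
  e x y -> branch_set x = branch_set y \/ GK_edges e (branch_set x) (branch_set y).
Proof.
move=> exy; case: (eqVneq (branch_set x) (branch_set y)) => [|Xxy]; [by left | right].
rewrite /GK_edges Xxy; apply/existsP; exists x; rewrite mem_branch_set /=.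
by apply/existsP; exists y; rewrite mem_branch_set.
Qed.

Lemma gconnected_branch_set_imset (V : {set T}) :
  gconnected V e -> gconnected (branch_set @: V) (GK_edges e).
Proof.
by apply: gconnected_imset => x y _ _; apply: GK_edges_branch_set.
Qed.

Lemma gconnected_branch_set x : gconnected (branch_set x) e.
Proof.
move=> y z /branch_set_eq <-; case yS: (y \in S).
  by rewrite /branch_set yS inE => /eqP->.
have By : branch_set y = [set w | connect (restr (~: S) e) y w].
  by rewrite /branch_set yS.
rewrite {1}By inE; apply: (connect_homo_in (f := id)) (mem_branch_set y) _.
move=> a ya b ab; have yb : b \in branch_set y.
  by move: ya; rewrite By !inE => /connect_trans; apply; apply: connect1.
by rewrite yb connect1 // /restr ya yb; case/and3P: ab.
Qed.

Lemma branch_set_exit s x :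
  gconnected [set: T] e -> s \in S -> x \notin S ->
  exists a b, [/\ a \in branch_set x, b \in S & e a b].
Proof.
move=> G_conn sS xS.
have sx : s \notin branch_set x.
  by apply: contraL sS => /(subsetP (branch_set_subC xS)); rewrite inE.
have [a [b [xa xb /and3P[_ _ ab]]]] :=
  connect_exit (P := [in branch_set x])
    (G_conn x s (in_setT x) (in_setT s)) (mem_branch_set x) sx.
exists a, b; split=> //; apply: contraNT xb => bS.
have aS : a \in ~: S by apply: (subsetP (branch_set_subC xS)).
move: xa; rewrite /branch_set (negbTE xS) !inE => /connect_trans; apply.
by apply: connect1; rewrite /restr aS inE bS.
Qed.

Lemma gconnected_setC_branch_set (eK : rel T) s c :
  gconnected [set: T] e -> subrel eK e -> gconnected S eK -> s \in S ->
  c \notin S -> gconnected (~: branch_set c) e.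
Proof.
move=> G_conn eKe K_conn sS cS; set C := branch_set c.
have SC : S \subset ~: C by rewrite subsetC branch_set_subC.
have K_C : {in S &, forall s1 s2, connect (restr (~: C) e) s1 s2}.
  by move=> s1 s2 s1S s2S; apply: connect_restr_sub SC eKe _ _ (K_conn s1 s2 s1S s2S).
have to_S u : u \in ~: C -> exists2 t, t \in S & connect (restr (~: C) e) u t.
  move=> uC; case uS: (u \in S); first by exists u.
  have [a [b [ua bS ab]]] := branch_set_exit G_conn sS (negbT uS).
  have uCC : branch_set u \subset ~: C.
    apply/subsetP => z zu; rewrite inE; apply: contraL uC => zC.
    by rewrite inE negbK /C -(branch_set_eq zC) (branch_set_eq zu) mem_branch_set.
  exists b => //; apply: connect_trans (connect1 _).
    exact: connect_restr_sub uCC (fun _ _ => id) _ _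
      (gconnected_branch_set (mem_branch_set u) ua).
  by rewrite /restr ab (subsetP uCC) // (subsetP SC).
move=> u w uC wC; have [s1 s1S us1] := to_S u uC; have [s2 s2S ws2] := to_S w wC.
apply: connect_trans us1 (connect_trans (K_C s1 s2 s1S s2S) _).
by rewrite (sym_connect_sym (restr_sym _ e_sym)).
Qed.

End BranchSets.

Unset Implicit Arguments.

Theorem lemma4p3 (T : finType) (e : rel T)
  (e_sym : symmetric e) (e_irr : irreflexive e)
  (S : {set T}) (eK : rel T)
  (eK_sub : forall x y, eK x y -> [&& x \in S, y \in S & e x y])
  (G2 : two_connected [set: T] e)
  (K_conn : gconnected S eK)
  (K3 : 3 <= #|S|) :
  two_connected (GK_vertices e S) (GK_edges e).
Proof.
case: G2 => _ [G_conn G_del].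
have eKe : subrel eK e by move=> x y /eK_sub/and3P[].
have [s sS] : exists s, s \in S by apply/set0Pn; rewrite -card_gt0 (leq_trans _ K3).
split; [|split].
- rewrite (leq_trans K3) // -(card_imset _ set1_inj).
  exact/subset_leq_card/subsetUl.
- by rewrite GK_verticesE; apply: gconnected_branch_set_imset.
move=> X; rewrite {1}GK_verticesE => /imsetP[x _ ->].
rewrite GK_vertices_setD1 //; apply: gconnected_branch_set_imset.
have [xS | xS] := boolP (x \in S).
  by rewrite /branch_set xS -setTD; apply: G_del; rewrite inE.
exact: (gconnected_setC_branch_set e_sym G_conn eKe K_conn sS xS).
Qed.
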